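(* Let $K\ge1$, let $\Pi_1,\dots,\Pi_K$ be arbitrary probability distributions on $\mathcal{X}^1\times\mathcal{Y}$, let $(q_1,\dots,q_K)$ be a probability vector, let $\alpha\in(0,1)$, and let $n_1,\dots,n_K\ge0$ be fixed integers with $n=\sum_k n_k$. Suppose calibration data $(X_1,Y_1),\dots,(X_n,Y_n)$ are generated independently with, for each $k$ and each $i\in\{n_1+\dots+n_{k-1}+1,\dots,n_1+\dots+n_k\}$, $X_i^0=k$ and $(X_i^1,Y_i)\sim\Pi_k$, and the test point $(X_{n+1},Y_{n+1})$ is drawn independently with $\mathbb{P}\{X^0_{n+1}=k\}=q_k$ and $(X^1_{n+1},Y_{n+1})\mid X^0_{n+1}=k\sim\Pi_k$. Let $s:\mathcal{X}\times\mathcal{Y}\to\mathbb{R}$ be any fixed measurable score function and let $\widehat{C}_n$ be the corrected GWCP prediction set defined in the context. Then $\mathbb{P}\{Y_{n+1}\in\widehat{C}_n(X_{n+1})\}\ge1-\alpha$.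
   Context: Features are $x=(x^0,x^1)\in[K]\times\mathcal{X}^1$ with $x^0$ the group label. For a probability distribution $\mu$ on $\mathbb{R}\cup\{+\infty\}$ and $\tau\in(0,1]$, $\textnormal{Quantile}_{\tau}(\mu)=\inf\{t\in\mathbb{R}\cup\{+\infty\}:\mu([-\infty,t])\ge\tau\}$, and $\textnormal{Quantile}_{\tau}(\mu)=+\infty$ for $\tau>1$; $\delta_s$ is the point mass at $s$. With $s_i=s(X_i,Y_i)$, $\widehat{P}^{(k)}_{\textnormal{score}}=\frac{1}{n_k}\sum_{i\le n:\,X_i^0=k}\delta_{s_i}$ if $n_k>0$ and $\widehat{P}^{(k)}_{\textnormal{score}}=\delta_{+\infty}$ if $n_k=0$. Set $\alpha_k=\alpha-q_k/n_k$ if $n_k>0$ and $\alpha_k=\alpha$ if $n_k=0$, and $\widehat{q}_k=\textnormal{Quantile}_{1-\alpha_k}\big(\sum_{j=1}^K q_j\widehat{P}^{(j)}_{\textnormal{score}}\big)$ (interpreted as $+\infty$ if $\alpha_k<0$). The corrected GWCP set is $\widehat{C}_n(x)=\{y\in\mathcal{Y}: s(x,y)\le\widehat{q}_k\}$ for any $x$ with $x^0=k$. *)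

From HB Require Import structures.
From mathcomp Require Import all_boot all_order all_algebra.
From mathcomp Require Import all_classical all_reals all_analysis.
Set Implicit Arguments. Unset Strict Implicit. Unset Printing Implicit Defensive.
Import Order.TTheory GRing.Theory Num.Theory.
Local Open Scope ring_scope.
Local Open Scope classical_set_scope.

Definition grp_count (n K : nat) (g : 'I_n -> 'I_K) (k : 'I_K) : nat :=
  #|[set i | g i == k]|.

(* CDF at t (in R ∪ {+oo}) of the group-k empirical score distribution
   \hat P^(k)_score: (1/n_k) sum_{i : X_i^0 = k} delta_{s_i} if n_k > 0,
   delta_{+oo} if n_k = 0. *)
Definition emp_cdf (R : realType) (n K : nat) (g : 'I_n -> 'I_K)
  (sc : 'I_n -> R) (k : 'I_K) (t : \bar R) : R :=
  if (grp_count g k > 0)%N then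
    (#|[set i | (g i == k) && ((sc i)%:E <= t)%E]|%:R / (grp_count g k)%:R)
  else (if t == +oo%E then 1 else 0).

Definition mix_cdf (R : realType) (n K : nat) (q : 'I_K -> R)
  (g : 'I_n -> 'I_K) (sc : 'I_n -> R) (t : \bar R) : R :=
  \sum_(j < K) q j * emp_cdf g sc j t.

Definition mix_quantile (R : realType) (n K : nat) (q : 'I_K -> R)
  (g : 'I_n -> 'I_K) (sc : 'I_n -> R) (tau : R) : \bar R :=
  if tau > 1 then +oo%E
  else ereal_inf [set t : \bar R | t != -oo%E /\ tau <= mix_cdf q g sc t].

Definition alpha_k (R : realType) (n K : nat) (q : 'I_K -> R) (alpha : R)
  (g : 'I_n -> 'I_K) (k : 'I_K) : R :=
  if (grp_count g k > 0)%N then alpha - q k / (grp_count g k)%:R else alpha.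

Definition gwcp_qhat (R : realType) (n K : nat) (q : 'I_K -> R) (alpha : R)
  (g : 'I_n -> 'I_K) (sc : 'I_n -> R) (k : 'I_K) : \bar R :=
  if alpha_k q alpha g k < 0 then +oo%E
  else mix_quantile q g sc (1 - alpha_k q alpha g k).

(* Corrected GWCP prediction set: y in \hat C_n(x) iff s(x,y) <= \hat q_{x^0}.
   Here the calibration data are given by group labels g and (x1_i, y_i). *)
Definition gwcp_set (R : realType) (n K : nat) (X1 Y : Type)
  (s : 'I_K * X1 -> Y -> R) (q : 'I_K -> R) (alpha : R)
  (g : 'I_n -> 'I_K) (data : 'I_n -> X1 * Y) (x : 'I_K * X1) : set Y :=
  [set y | ((s x y)%:E <=
    gwcp_qhat q alpha g (fun i => s (g i, (data i).1) (data i).2) x.1)%E].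

(* A test point of group k is missed exactly when the calibration scores lying strictly
   below its score carry weight at least 1 - alpha_k, calibration point i weighing
   q_{g i} / n_{g i}. Given X^0_{n+1} = k, the test point has the law of every calibration
   point i of group k and is independent of all calibration points, so exchanging the two
   scores does not change the probability of a miss. After the exchange the correction
   alpha_k = alpha - q_k / n_k absorbs exactly the weight of the moved point: a miss forces
   point i to be high-rank, i.e. to have weight at least 1 - alpha strictly below its own
   score. Averaging over the n_k points of each group bounds the miss probability by the
   expected weight of the high-rank calibration points plus, when Q0 <= alpha, the mass Q0
   of the empty groups. Pointwise, the high-rank points all lie at or above the lowest of
   them, below which sits weight at least 1 - alpha out of the total 1 - Q0; so they weigh
   at most alpha - Q0, and the miss probability is at most alpha. *)

From HB Require Import structures.
From mathcomp Require Import all_boot all_order all_algebra.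
From mathcomp Require Import all_classical all_reals all_analysis.
From mathcomp Require Import perm measurable_realfun lra.
Set Implicit Arguments. Unset Strict Implicit. Unset Printing Implicit Defensive.
Import Order.TTheory GRing.Theory Num.Theory.
Local Open Scope ring_scope.
Local Open Scope classical_set_scope.

(** * Weighted ranks of calibration scores *)

Lemma in_set_pred (T : Type) (P : pred T) x : (x \in [set y | P y]) = P x.
Proof. by apply/idP/idP => [/set_mem|/mem_set]. Qed.

Section weighted_ranks.
Variables (R : realType) (n K : nat) (q : 'I_K -> R) (g : 'I_n -> 'I_K).
Hypotheses (q_ge0 : forall k, 0 <= q k) (sum_q1 : \sum_(k < K) q k = 1).

Definition weight (i : 'I_n) : R := q (g i) / (grp_count g (g i))%:R.

Definition mass_below (x : 'I_n -> R) (t : R) : R := \sum_(i < n | x i < t) weight i.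

Definition empty_mass : R := \sum_(k < K | grp_count g k == 0%N) q k.

Lemma weight_ge0 i : 0 <= weight i.
Proof. by rewrite divr_ge0. Qed.

Lemma grp_count_gt0 i : (0 < grp_count g (g i))%N.
Proof. by apply/card_gt0P; exists i; rewrite in_set_pred. Qed.

Lemma sum_grp_const (c : R) k : \sum_(i < n | g i == k) c = c *+ grp_count g k.
Proof.
by rewrite /grp_count -sumr_const; apply: eq_bigl => i; rewrite in_set_pred.
Qed.

Lemma sum_grp_weight k :
  \sum_(i < n | g i == k) weight i = q k *+ (0 < grp_count g k)%N.
Proof.
rewrite (eq_bigr (fun=> q k / (grp_count g k)%:R)); last by move=> i /eqP <-.
rewrite sum_grp_const; case: (posnP (grp_count g k)) => [-> //|nk_gt0].
by rewrite -[LHS]mulr_natr divfK // pnatr_eq0 -lt0n.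
Qed.

Lemma sum_weight : \sum_(i < n) weight i = 1 - empty_mass.
Proof.
rewrite -sum_q1 (partition_big g predT) //=; under eq_bigr do rewrite sum_grp_weight.
rewrite [X in _ = X - _](bigID (fun k => grp_count g k == 0%N)) /= addrAC subrr add0r.
rewrite [LHS](bigID (fun k => grp_count g k == 0%N)) /= big1 ?add0r.
  by apply: eq_bigr => k nk0; rewrite lt0n nk0.
by move=> k /eqP ->.
Qed.

Lemma mix_cdf_EFin x r : mix_cdf q g x r%:E = \sum_(i < n | x i <= r) weight i.
Proof.
rewrite /mix_cdf [RHS](partition_big g predT) //=; apply: eq_bigr => k _.
rewrite /emp_cdf; case: ifPn => [_|]; last first.
  rewrite -eqn0Ngt => /eqP nk0; rewrite mulr0 big1 // => i /andP[_ /eqP gik].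
  by have := grp_count_gt0 i; rewrite gik nk0.
rewrite (eq_bigr (fun=> q k / (grp_count g k)%:R)); last by move=> i /andP[_ /eqP <-].
rewrite (eq_bigl (fun i => i \in [set j | (g j == k) && ((x j)%:E <= r%:E)%E])).
  by rewrite sumr_const -[RHS]mulr_natr mulrAC mulrA.
by move=> i; rewrite in_set_pred lee_fin andbC.
Qed.

Lemma sum_weight_mono (A B : pred 'I_n) : subpred A B ->
  \sum_(i < n | A i) weight i <= \sum_(i < n | B i) weight i.
Proof.
move=> AB; rewrite [leLHS]big_mkcond [leRHS]big_mkcond; apply: ler_sum => i _.
by case: ifP => [/AB -> //|_]; case: ifP; rewrite ?weight_ge0.
Qed.

Lemma empty_mass_ge0 : 0 <= empty_mass.
Proof. exact: sumr_ge0. Qed.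

Lemma mass_below_le x t : mass_below x t <= 1 - empty_mass.
Proof. by rewrite -sum_weight; exact: (sum_weight_mono (B := predT)). Qed.

Variable alpha : R.

Lemma alpha_k_le k : alpha_k q alpha g k <= alpha.
Proof. by rewrite /alpha_k; case: ifP => // _; rewrite lerBlDr lerDl divr_ge0. Qed.

Lemma gwcp_qhat_ltP x u k : alpha < 1 ->
  (gwcp_qhat q alpha g x k < u%:E)%E <-> 1 - alpha_k q alpha g k <= mass_below x u.
Proof.
move=> alpha_lt1; have ak_le := alpha_k_le k.
pose S := [set t : \bar R | t != -oo%E /\ 1 - alpha_k q alpha g k <= mix_cdf q g x t].
have qhatE : 0 <= alpha_k q alpha g k -> gwcp_qhat q alpha g x k = ereal_inf S.
  move=> ak_ge0; rewrite /gwcp_qhat /mix_quantile ltNge ak_ge0 /= ifF //.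
  by apply/negbTE; rewrite -leNgt; lra.
split.
  have [ak_lt0|ak_ge0] := ltP (alpha_k q alpha g k) 0.
    by rewrite /gwcp_qhat ak_lt0 ltNge leey.
  rewrite qhatE // => /ereal_inf_lt[t [tNoo St]].
  case: t tNoo St => [r _ Sr|_ _|/eqP //]; last by rewrite ltNge leey.
  rewrite lte_fin => r_lt_u.
  rewrite (le_trans Sr) // mix_cdf_EFin; apply: sum_weight_mono => i /= xi_le.
  exact: le_lt_trans xi_le r_lt_u.
move=> ak_below; have ak_ge0 : 0 <= alpha_k q alpha g k.
  by move: (mass_below_le x u) empty_mass_ge0 ak_below; lra.
have [i1 xi1_lt] : exists i, x i < u. (* else alpha_k >= 1 > alpha *)
  apply/not_existsP => none_lt; move: ak_below; rewrite /mass_below big_pred0; first lra.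
  by move=> i; apply/negP => xi_lt; apply: (none_lt i).
case: (@arg_maxP _ _ _ i1 (fun i => x i < u) x xi1_lt) => i0 xi0_lt xi0_max.
rewrite qhatE // (le_lt_trans (ereal_inf_lbound (_ : S (x i0)%:E))) ?lte_fin //.
split=> //; rewrite mix_cdf_EFin (le_trans ak_below) //; exact: sum_weight_mono.
Qed.

Lemma alpha_k_grp i : alpha_k q alpha g (g i) = alpha - weight i.
Proof. by rewrite /alpha_k grp_count_gt0. Qed.

Lemma alpha_k_empty k : grp_count g k = 0%N -> alpha_k q alpha g k = alpha.
Proof. by rewrite /alpha_k => ->. Qed.

Lemma mass_below_upd_le (y x : 'I_n -> R) i t : (forall j, j != i -> y j = x j) ->
  mass_below y t <= mass_below x t + weight i.
Proof.
move=> yx; rewrite /mass_below [X in X <= _]big_mkcond [X in _ <= X + _]big_mkcond.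
rewrite (bigD1 i) //= [X in _ <= X + _](bigD1 i) //=.
rewrite (eq_bigr (fun j => if x j < t then weight j else 0)) => [|j /yx -> //].
rewrite addrAC lerD2r; have := weight_ge0 i.
by case: ifP; case: ifP => _ _; lra.
Qed.

Lemma sum_high_rank_le x : 0 <= alpha ->
  \sum_(i < n) weight i * (1 - alpha <= mass_below x (x i))%R%:R
    + empty_mass * (empty_mass <= alpha)%R%:R <= alpha.
Proof.
move=> alpha_ge0; have Q0_ge0 := empty_mass_ge0.
have [[i1 high_i1]|no_high] := pselect (exists i, 1 - alpha <= mass_below x (x i)); last first.
  rewrite big1 ?add0r => [|i _]; last first.
    by case: (boolP (1 - alpha <= _)) => [high_i|_]; [case: no_high; exists i|rewrite mulr0].
  by case: (lerP empty_mass alpha); rewrite ?mulr1 ?mulr0.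
case: (@arg_minP _ _ _ i1 (fun i => 1 - alpha <= mass_below x (x i)) x high_i1).
move=> i0 high_i0 min_i0.
have disjoint_le : \sum_(i < n) weight i * (1 - alpha <= mass_below x (x i))%R%:R
    + mass_below x (x i0) <= 1 - empty_mass.
  rewrite -sum_weight /mass_below [X in _ + X <= _]big_mkcond -big_split /=; apply: ler_sum => i _.
  case: (boolP (1 - alpha <= _)) => [/min_i0|_]; first by rewrite ltNge => ->; rewrite mulr1 addr0.
  by rewrite mulr0 add0r; case: ifP; rewrite ?weight_ge0.
have Q0_le : empty_mass <= alpha by move: (mass_below_le x (x i0)) high_i0; lra.
by rewrite Q0_le mulr1; move: disjoint_le high_i0; lra.
Qed.

End weighted_ranks.

(** * Probability bounds *)

Lemma measurable_preimage d1 d2 (T1 : measurableType d1) (T2 : measurableType d2)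
    (f : T1 -> T2) (A : set T2) :
  measurable_fun setT f -> measurable A -> measurable (f @^-1` A).
Proof. by move=> mf mA; rewrite -[X in measurable X]setTI; exact: mf. Qed.

Section probability_bounds.
Context d (T : measurableType d) (R : realType) (P : probability T R).

Lemma probE A : measurable A -> P A = (fine (P A))%:E.
Proof. by move=> mA; rewrite fineK ?fin_num_measure. Qed.

Lemma prob_sum_fibres (I : finType) (F : T -> I) (A : set T) :
  (forall k, measurable (F @^-1` [set k])) -> measurable A ->
  P A = (\sum_(k : I) P (F @^-1` [set k] `&` A))%E.
Proof.
move=> mF mA; have AE : A = \bigcup_(k in [set: I]) (F @^-1` [set k] `&` A).
  by apply/seteqP; split => [x Ax|x [k _ []] //]; exists (F x).
rewrite {1}AE measure_fin_bigcup //.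
- have -> : [set: I] = [set` enum I] by apply/seteqP; split => k //= _; rewrite mem_enum.
  by rewrite -fsbig_seq ?enum_uniq // big_enum.
- exact: finite_finset.
- apply/trivIsetP => k l _ _ kl; apply/seteqP; split => // x [[/= Fk _] [/= Fl _]].
  by move: kl; rewrite -Fk -Fl eqxx.
- by move=> k _; exact: measurableI.
Qed.

Lemma wsum_prob_le (I : finType) (A : I -> set T) (w : I -> R) (c : R) :
  (forall i, measurable (A i)) -> (forall i, 0 <= w i) ->
  (forall x, \sum_i w i * \1_(A i) x <= c) ->
  \sum_i w i * fine (P (A i)) <= c.
Proof.
move=> mA w_ge0 pointwise_le.
have mIA i : measurable_fun setT (fun x => (\1_(A i) x : R)%:E).
  exact/measurable_EFinP/measurable_indic.
have mwIA i : measurable_fun setT (fun x => (w i * \1_(A i) x)%:E).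
  by apply/measurable_EFinP/measurable_funM => //; exact/measurable_EFinP.
rewrite -lee_fin -sumEFin.
have -> : (\sum_i (w i * fine (P (A i)))%:E =
           \int[P]_x (\sum_i (w i * \1_(A i) x)%:E)%E)%E.
  rewrite ge0_integral_sum // => [|i x _]; last by rewrite lee_fin mulr_ge0.
  apply: eq_bigr => i _; under eq_integral do rewrite EFinM.
  by rewrite ge0_integralZl_EFin ?integral_indic ?setIT ?EFinM ?fineK ?fin_num_measure.
apply: (@le_trans _ _ (\int[P]_x (cst c%:E) x)%E).
  apply: ge0_le_integral => //.
  - by move=> x _; rewrite sumEFin lee_fin; apply: sumr_ge0 => i _; rewrite mulr_ge0.
  - exact: emeasurable_sum.
  - by move=> x _; rewrite sumEFin lee_fin.
have cPT : (c%:E * P setT = c%:E)%E by rewrite probability_setT mule1.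
by rewrite (integral_cst P) // cPT.
Qed.

End probability_bounds.

(** * Score vectors and their laws *)

(* The product Borel sigma-algebra on [I -> R], presented through its generating pi-system
   of open lower orthants, on which laws of score vectors are compared. *)
Section score_space.
Variables (R : realType) (I : finType).

Definition scores := I -> R.
HB.instance Definition _ := gen_eqMixin scores.
HB.instance Definition _ := gen_choiceMixin scores.
HB.instance Definition _ := isPointed.Build scores (fun=> 0).

Definition rect (a : I -> \bar R) : set scores := [set x | forall i, ((x i)%:E < a i)%E].

Definition score_space := g_sigma_algebraType (range rect).
HB.instance Definition _ := Measurable.on score_space.

Lemma rectT : rect (fun=> +oo%E) = setT.
Proof. by apply/seteqP; split => // x _ i; rewrite ltry. Qed.

Lemma rect_setI : setI_closed (range rect).
Proof.
move=> _ _ [a _ <-] [b _ <-]; exists (fun i => Order.min (a i) (b i)) => //.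
apply/seteqP; split => x /=.
  by move=> xab; split => i; have := xab i; rewrite lt_min => /andP[].
by move=> [xa xb] i; rewrite lt_min xa xb.
Qed.

Lemma measurable_rect a : measurable (rect a : set score_space).
Proof. by apply: sub_sigma_algebra; exists a. Qed.

Lemma measurable_coord i : measurable_fun setT (fun x : score_space => x i).
Proof.
apply: (measurability _ (RGenInftyO.measurableE R)) => // _ [_ [r ->] <-].
rewrite setTI.
have -> : (fun x : score_space => x i) @^-1` `]-oo, r[ =
    rect (fun j => if j == i then r%:E else +oo%E).
  apply/seteqP; split => x /=; rewrite in_itv /=.
    by move=> xi_lt j; case: eqP => [->|_]; rewrite ?lte_fin ?ltry.
  by move=> /(_ i); rewrite eqxx lte_fin.
exact: measurable_rect.
Qed.

Lemma measurable_mass_lt (J : finType) (w : J -> R) (f : J -> I) (o : I) (c : R) :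
  measurable [set x : score_space | c <= \sum_(j | x (f j) < x o) w j].
Proof.
pose F (x : score_space) := \sum_j (if x (f j) < x o then w j else 0).
have mF : measurable_fun setT F.
  apply: measurable_sum => j; apply: measurable_fun_ifT => //.
  by apply: measurable_fun_ltr; exact: measurable_coord.
have -> : [set x : score_space | c <= \sum_(j | x (f j) < x o) w j] = F @^-1` `[c, +oo[.
  by apply/seteqP; split => x /=; rewrite in_itv /= andbT big_mkcond.
by rewrite -[X in measurable X]setTI; exact: mF.
Qed.

Lemma preimage_tperm_rect i j a :
  (fun x : scores => x \o tperm i j) @^-1` rect a = rect (a \o tperm i j).
Proof.
by apply/seteqP; split => x /= xa o; have := xa (tperm i j o); rewrite /= tpermK.
Qed.

Lemma measurable_fun_rect d' (T : measurableType d') (f : T -> score_space) :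
  (forall a, measurable (f @^-1` rect a)) -> measurable_fun setT f.
Proof.
move=> mf; apply: (measurability (range rect : set (set score_space))) => //.
by move=> _ [_ [a _ <-] <-]; rewrite setTI.
Qed.

Lemma eq_prob_rect d' (T : measurableType d') (P : probability T R)
    (E1 E2 : set T) (f1 f2 : T -> score_space) (c : R) :
  measurable E1 -> measurable E2 ->
  measurable_fun setT f1 -> measurable_fun setT f2 -> 0 <= c ->
  (forall a, P (f1 @^-1` rect a `&` E1) = (c%:E * P (f2 @^-1` rect a `&` E2))%E) ->
  forall A, measurable A -> P (f1 @^-1` A `&` E1) = (c%:E * P (f2 @^-1` A `&` E2))%E.
Proof.
move=> mE1 mE2 mf1 mf2 c_ge0 rect_eq A mA.
have := @measure_unique _ R score_space (range rect : set (set score_space)) (fun=> setT)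
  erefl rect_setI (fun=> ex_intro2 _ _ _ Logic.I rectT) (bigcup_const _ (ex_intro _ 0%N Logic.I))
  (pushforward (mrestr P mE1) f1) (mscale (NngNum c_ge0) (pushforward (mrestr P mE2) f2)).
move/(_ mf1 mf2); apply => [_ [a _ <-]|_|//]; first exact: rect_eq.
apply: le_lt_trans (probability_le1 P _) (ltry _).
by apply: measurableI => //; exact: measurable_preimage mf1 measurableT.
Qed.
End score_space.

(** * Coverage of the corrected GWCP set *)

Section gwcp_model.
Context d (Omega : measurableType d) (R : realType) (P : probability Omega R).
Context d1 d2 (X1 : measurableType d1) (Y : measurableType d2).
Variables (K n : nat) (Pi : 'I_K -> probability (X1 * Y)%type R).
Variables (q : 'I_K -> R) (alpha : R) (g : 'I_n -> 'I_K) (s : 'I_K * X1 -> Y -> R).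
Variables (Z : 'I_n -> Omega -> (X1 * Y)%type) (G : Omega -> 'I_K) (W : Omega -> (X1 * Y)%type).
Hypotheses (q_ge0 : forall k, 0 <= q k) (sum_q1 : \sum_(k < K) q k = 1).
Hypotheses (alpha_ge0 : 0 <= alpha) (alpha_lt1 : alpha < 1).
Hypotheses (mZ : forall i, measurable_fun setT (Z i)) (mW : measurable_fun setT W).
Hypothesis mG : forall k, measurable (G @^-1` [set k]).
Hypothesis ms : forall k, measurable_fun setT (fun xy : (X1 * Y)%type => s (k, xy.1) xy.2).
Hypothesis Z_law : forall i A, measurable A -> P (Z i @^-1` A) = Pi (g i) A.
Hypothesis test_law : forall k B, measurable B ->
  P (G @^-1` [set k] `&` W @^-1` B) = ((q k)%:E * Pi k B)%E.
Hypothesis indep : forall (A : 'I_n -> set (X1 * Y)%type) (k : 'I_K) (B : set (X1 * Y)%type),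
  (forall i, measurable (A i)) -> measurable B ->
  P ((\bigcap_i (Z i @^-1` A i)) `&` (G @^-1` [set k] `&` W @^-1` B))
  = ((\prod_(i < n) P (Z i @^-1` A i)) * P (G @^-1` [set k] `&` W @^-1` B))%E.

Local Notation grp k := (G @^-1` [set k]).

Definition score k (xy : X1 * Y) : R := s (k, xy.1) xy.2.

Definition cal_scores w : score_space R 'I_n := fun i => score (g i) (Z i w).

(* Index [None] holds the test score, computed as if the test point were in group [k]. *)
Definition all_scores k w : score_space R (option 'I_n) :=
  fun o => if o is Some i then cal_scores w i else score k (W w).

Definition swapped_scores k i w : score_space R (option 'I_n) :=
  all_scores k w \o tperm None (Some i).

Definition score_lt k (e : \bar R) : set (X1 * Y) := [set xy | ((score k xy)%:E < e)%E].

Lemma measurable_score_lt k e : measurable (score_lt k e).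
Proof.
rewrite /score_lt -[X in measurable X]setTI; apply: emeasurable_fun_infty_o => //.
by apply/measurable_EFinP; exact: ms.
Qed.

Lemma cal_scores_preimage_rect a :
  cal_scores @^-1` rect a = \bigcap_i (Z i @^-1` score_lt (g i) (a i)).
Proof. by apply/seteqP; split => w /= h i; [move=> _; exact: h|exact: h]. Qed.

Lemma all_scores_preimage_rect k a : all_scores k @^-1` rect a =
  cal_scores @^-1` rect (a \o Some) `&` W @^-1` score_lt k (a None).
Proof.
apply/seteqP; split => w /=; first by move=> h; split => [i|]; exact: h.
by move=> [h1 h2] [i|] //; exact: h1.
Qed.

Lemma measurable_cal_scores : measurable_fun setT cal_scores.
Proof.
apply: measurable_fun_rect => a; rewrite cal_scores_preimage_rect.
apply: fin_bigcap_measurable => [|i _]; first exact: finite_finset.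
by apply: measurable_preimage; [exact: mZ|exact: measurable_score_lt].
Qed.

Lemma measurable_all_scores k : measurable_fun setT (all_scores k).
Proof.
apply: measurable_fun_rect => a; rewrite all_scores_preimage_rect.
apply: measurableI; first exact: measurable_preimage measurable_cal_scores (measurable_rect _).
by apply: measurable_preimage; [exact: mW|exact: measurable_score_lt].
Qed.

Lemma swapped_scores_preimage_rect k i a :
  swapped_scores k i @^-1` rect a = all_scores k @^-1` rect (a \o tperm None (Some i)).
Proof. by rewrite -preimage_tperm_rect. Qed.

Lemma measurable_swapped_scores k i : measurable_fun setT (swapped_scores k i).
Proof.
apply: measurable_fun_rect => a; rewrite swapped_scores_preimage_rect.
exact: measurable_preimage (measurable_all_scores k) (measurable_rect _).
Qed.

Lemma prob_grp k : P (grp k) = (q k)%:E.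
Proof.
have := test_law k measurableT; rewrite preimage_setT setIT => ->.
by rewrite probability_setT mule1.
Qed.

Lemma prob_cal_test_rect k a B : measurable B ->
  P (cal_scores @^-1` rect a `&` (grp k `&` W @^-1` B)) =
  (\prod_i Pi (g i) (score_lt (g i) (a i)) * ((q k)%:E * Pi k B))%E.
Proof.
move=> mB; rewrite cal_scores_preimage_rect indep ?test_law // => [|i].
  by under eq_bigr => i _ do rewrite (Z_law _ (measurable_score_lt _ _)).
exact: measurable_score_lt.
Qed.

Lemma prob_cal_rect a :
  P (cal_scores @^-1` rect a) = (\prod_i Pi (g i) (score_lt (g i) (a i)))%E.
Proof.
rewrite (prob_sum_fibres _ mG (measurable_preimage measurable_cal_scores (measurable_rect a))).
under eq_bigr => k _ do
  rewrite setIC -[grp k]setIT -(preimage_setT W) prob_cal_test_rect // probability_setT mule1.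
by rewrite -ge0_sume_distrr => [|k _]; rewrite ?sumEFin ?sum_q1 ?mule1 ?lee_fin.
Qed.

Lemma cal_scores_indep_grp k A : measurable A ->
  P (cal_scores @^-1` A `&` grp k) = ((q k)%:E * P (cal_scores @^-1` A))%E.
Proof.
move=> mA; rewrite -[X in (_ * P X)%E]setIT.
apply: (eq_prob_rect (mG k) measurableT measurable_cal_scores measurable_cal_scores
  (q_ge0 k) _ mA) => a.
rewrite setIT prob_cal_rect -[grp k]setIT -(preimage_setT W) prob_cal_test_rect //.
by rewrite probability_setT mule1 muleC.
Qed.

Lemma prob_all_scores_rect k a : P (all_scores k @^-1` rect a `&` grp k) =
  (\prod_i Pi (g i) (score_lt (g i) (a (Some i))) * ((q k)%:E * Pi k (score_lt k (a None))))%E.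
Proof.
rewrite all_scores_preimage_rect -setIA [W @^-1` _ `&` _]setIC prob_cal_test_rect //.
exact: measurable_score_lt.
Qed.

Lemma all_scores_swap_invariant k i A : g i = k -> measurable A ->
  P (all_scores k @^-1` A `&` grp k) = P (swapped_scores k i @^-1` A `&` grp k).
Proof.
move=> gi mA; rewrite -[RHS]mul1e.
apply: (eq_prob_rect (mG k) (mG k) (measurable_all_scores k)
  (measurable_swapped_scores k i) ler01 _ mA) => a.
rewrite mul1e swapped_scores_preimage_rect !prob_all_scores_rect /= tpermL.
rewrite (bigD1 i) //= [in RHS](bigD1 i) //= tpermR gi.
rewrite [in RHS](eq_bigr (fun j => Pi (g j) (score_lt (g j) (a (Some j))))) => [|j ji]; last first.
  by rewrite tpermD // eq_sym.
by rewrite muleCA [RHS]muleCA muleAC [in RHS]muleAC (muleC (Pi k _)).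
Qed.

Definition miss_set k : set (score_space R (option 'I_n)) :=
  [set x : score_space R (option 'I_n) |
    1 - alpha_k q alpha g k <= mass_below q g (x \o Some) (x None)].

Definition high_rank i : set (score_space R 'I_n) :=
  [set x : score_space R 'I_n | 1 - alpha <= mass_below q g x (x i)].

Lemma measurable_miss_set k : measurable (miss_set k).
Proof. exact: measurable_mass_lt. Qed.

Lemma measurable_high_rank i : measurable (high_rank i).
Proof. exact: (measurable_mass_lt _ id). Qed.

Lemma miss_swap_high_rank k i (x : score_space R (option 'I_n)) : g i = k ->
  miss_set k (x \o tperm None (Some i)) -> high_rank i (x \o Some).
Proof.
move=> <-; rewrite /miss_set /high_rank /= tpermL alpha_k_grp => miss.
have : mass_below q g (x \o tperm None (Some i) \o Some) (x (Some i))
    <= mass_below q g (x \o Some) (x (Some i)) + weight q g i.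
  by apply: mass_below_upd_le => // j ji /=; rewrite tpermD // eq_sym.
by move: miss; lra.
Qed.

Local Notation pr A := (fine (P A)).

Lemma measurable_cal_high_rank i : measurable (cal_scores @^-1` high_rank i).
Proof. exact: measurable_preimage measurable_cal_scores (measurable_high_rank i). Qed.

Lemma measurable_miss_grp k : measurable (all_scores k @^-1` miss_set k `&` grp k).
Proof.
apply: measurableI => //.
exact: measurable_preimage (measurable_all_scores k) (measurable_miss_set k).
Qed.

Lemma prob_miss_grp_le k : (0 < grp_count g k)%N ->
  pr (all_scores k @^-1` miss_set k `&` grp k)
    <= \sum_(i < n | g i == k) weight q g i * pr (cal_scores @^-1` high_rank i).
Proof.
move=> nk_gt0.
have miss_le i : g i = k -> pr (all_scores k @^-1` miss_set k `&` grp k)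
    <= q k * pr (cal_scores @^-1` high_rank i).
  move=> gi; rewrite -lee_fin EFinM -(probE _ (measurable_miss_grp k)).
  rewrite -(probE _ (measurable_cal_high_rank i)).
  rewrite -(cal_scores_indep_grp k (measurable_high_rank i)).
  rewrite (all_scores_swap_invariant gi (measurable_miss_set k)).
  apply: le_measure; rewrite ?inE.
  - apply: measurableI => //.
    exact: measurable_preimage (measurable_swapped_scores k i) (measurable_miss_set k).
  - exact: measurableI (measurable_cal_high_rank i) (mG k).
  - by move=> w [/miss_swap_high_rank + Gw]; move/(_ gi).
have sum_le : pr (all_scores k @^-1` miss_set k `&` grp k) *+ grp_count g k
    <= \sum_(i < n | g i == k) q k * pr (cal_scores @^-1` high_rank i).
  by rewrite -sum_grp_const; apply: ler_sum => j /eqP; exact: miss_le.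
rewrite (eq_bigr (fun i => q k * pr (cal_scores @^-1` high_rank i) / (grp_count g k)%:R));
  last by move=> i /eqP <-; rewrite /weight mulrAC.
by rewrite -mulr_suml ler_pdivlMr ?ltr0n // mulr_natr.
Qed.

Lemma prob_miss_empty_le k : grp_count g k = 0%N ->
  pr (all_scores k @^-1` miss_set k `&` grp k) <= q k * (empty_mass q g <= alpha)%R%:R.
Proof.
move=> nk0; have [Q0_le|Q0_gt] := lerP (empty_mass q g) alpha; rewrite ?mulr1 ?mulr0.
  rewrite -lee_fin -prob_grp -(probE _ (measurable_miss_grp k)).
  by apply: le_measure; rewrite ?inE //; exact: measurable_miss_grp.
have -> : all_scores k @^-1` miss_set k `&` grp k = set0.
  apply/seteqP; split => // w [/=]; rewrite /miss_set /= (alpha_k_empty q alpha nk0) => miss _.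
  by move: miss (mass_below_le g q_ge0 sum_q1 (cal_scores w) (score k (W w))); lra.
by rewrite measure0.
Qed.

Definition covered : set Omega :=
  [set w | gwcp_set s q alpha g (fun i => Z i w) (G w, (W w).1) (W w).2].

Lemma not_covered_grp k : ~` covered `&` grp k = all_scores k @^-1` miss_set k `&` grp k.
Proof.
have qhat_ltP := gwcp_qhat_ltP g q_ge0 sum_q1 _ _ k alpha_lt1.
apply/seteqP; split => w [/= covw Gw]; split => //; move: covw; rewrite /covered /gwcp_set /= Gw.
  by move/negP; rewrite -ltNge => /qhat_ltP.
by move/qhat_ltP; rewrite ltNge => /negP.
Qed.

Lemma measurable_not_covered : measurable (~` covered).
Proof.
have -> : ~` covered = \bigcup_(k in [set: 'I_K]) (all_scores k @^-1` miss_set k `&` grp k).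
  apply/seteqP; split => [w ncov|w [k _]]; last by rewrite -not_covered_grp => -[].
  by exists (G w) => //; rewrite -not_covered_grp.
apply: fin_bigcup_measurable => [|k _]; first exact: finite_finset.
exact: measurable_miss_grp.
Qed.

Lemma expected_high_rank_le :
  \sum_i weight q g i * pr (cal_scores @^-1` high_rank i)
    + empty_mass q g * (empty_mass q g <= alpha)%R%:R <= alpha.
Proof.
rewrite -lerBrDr; apply: wsum_prob_le => [i|i|w].
- exact: measurable_cal_high_rank.
- exact: weight_ge0.
rewrite lerBrDr (eq_bigr (fun i => weight q g i
    * (1 - alpha <= mass_below q g (cal_scores w) (cal_scores w i))%R%:R)).
  exact: sum_high_rank_le.
move=> i _; rewrite indicE.
by rewrite (in_set_pred (fun w => 1 - alpha <= mass_below q g (cal_scores w) (cal_scores w i))).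
Qed.

Lemma prob_not_covered_le : pr (~` covered) <= alpha.
Proof.
have -> : pr (~` covered) = \sum_k pr (all_scores k @^-1` miss_set k `&` grp k).
  rewrite (prob_sum_fibres P mG measurable_not_covered).
  under eq_bigr => k _ do rewrite setIC not_covered_grp (probE _ (measurable_miss_grp k)).
  by rewrite sumEFin.
pose c := (empty_mass q g <= alpha)%R%:R : R.
have nonempty_le : \sum_(k | (0 < grp_count g k)%N) pr (all_scores k @^-1` miss_set k `&` grp k)
    <= \sum_i weight q g i * pr (cal_scores @^-1` high_rank i).
  apply: le_trans (_ : _ <= \sum_(k | (0 < grp_count g k)%N)
      \sum_(i | g i == k) weight q g i * pr (cal_scores @^-1` high_rank i)) _.
    by apply: ler_sum => k; exact: prob_miss_grp_le.
  rewrite [leRHS](partition_big g predT) //= [leRHS](bigID (fun k => 0 < grp_count g k)%N) /=.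
  rewrite lerDl; apply: sumr_ge0 => k _; apply: sumr_ge0 => j _.
  by rewrite mulr_ge0 ?weight_ge0 ?fine_ge0.
have empty_le : \sum_(k | ~~ (0 < grp_count g k)%N) pr (all_scores k @^-1` miss_set k `&` grp k)
    <= empty_mass q g * c.
  apply: le_trans (_ : _ <= \sum_(k | ~~ (0 < grp_count g k)%N) q k * c) _.
    by apply: ler_sum => k; rewrite lt0n negbK => /eqP; exact: prob_miss_empty_le.
  rewrite /empty_mass mulr_suml [leRHS](eq_bigl (fun k => ~~ (0 < grp_count g k)%N)) //.
  by move=> k; rewrite lt0n negbK.
have := expected_high_rank_le.
by rewrite (bigID (fun k => 0 < grp_count g k)%N) /= -/c; lra.
Qed.

Theorem gwcp_coverage : ((1 - alpha)%:E <= P covered)%E.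
Proof.
rewrite -[covered]setCK (probability_setC _ measurable_not_covered).
by rewrite (probE _ measurable_not_covered) -EFinB lee_fin lerD2l lerN2 prob_not_covered_le.
Qed.

End gwcp_model.

Theorem theorem3
  (R : realType) (d : measure_display) (Omega : measurableType d)
  (P : probability Omega R)
  (d1 d2 : measure_display) (X1 : measurableType d1) (Y : measurableType d2)
  (K : nat) (HK : (0 < K)%N)
  (Pi : 'I_K -> probability (X1 * Y)%type R)
  (q : 'I_K -> R) (Hq0 : forall k, 0 <= q k) (Hq1 : \sum_(k < K) q k = 1)
  (alpha : R) (Ha0 : 0 < alpha) (Ha1 : alpha < 1)
  (nk : 'I_K -> nat) (n : nat) (Hn : n = \sum_(k < K) nk k)
  (g : 'I_n -> 'I_K)
  (Hg : forall (i : 'I_n) (k : 'I_K),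
      (g i == k) = ((\sum_(j < K | (j < k)%N) nk j <= i)
                    && (i < \sum_(j < K | (j <= k)%N) nk j))%N)
  (Z : 'I_n -> Omega -> (X1 * Y)%type)
  (G : Omega -> 'I_K) (W : Omega -> (X1 * Y)%type)
  (HZm : forall i, measurable_fun setT (Z i))
  (HWm : measurable_fun setT W)
  (HGm : forall k, measurable (G @^-1` [set k]))
  (HZlaw : forall i A, measurable A -> P (Z i @^-1` A) = Pi (g i) A)
  (Htest : forall k B, measurable B ->
      P (G @^-1` [set k] `&` W @^-1` B) = ((q k)%:E * Pi k B)%E)
  (Hindep : forall (A : 'I_n -> set (X1 * Y)%type) (k : 'I_K) (B : set (X1 * Y)%type),
      (forall i, measurable (A i)) -> measurable B ->
      P ((\bigcap_i (Z i @^-1` A i)) `&` (G @^-1` [set k] `&` W @^-1` B))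
      = ((\prod_(i < n) P (Z i @^-1` A i)) * P (G @^-1` [set k] `&` W @^-1` B))%E)
  (s : 'I_K * X1 -> Y -> R)
  (Hs : forall k, measurable_fun setT (fun xy : (X1 * Y)%type => s (k, xy.1) xy.2)) :
  ((1 - alpha)%:E <=
   P [set w | gwcp_set s q alpha g (fun i => Z i w) (G w, (W w).1) (W w).2])%E.
Proof.
exact: (gwcp_coverage Hq0 Hq1 (ltW Ha0) Ha1 HZm HWm HGm Hs HZlaw Htest Hindep).
Qed.
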